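(* Let $a_0,a_1,a_3\in\mathbb{C}$. The third-order recursion $$z_n = \frac{a_3 z_{n-3} + z_{n-2} + a_1 z_{n-1} + a_0}{z_{n-3}}$$ is periodic with period $8$ (i.e. $z_9=z_1$, $z_{10}=z_2$, $z_{11}=z_3$ in $\mathbb{C}(z_1,z_2,z_3)$) if and only if $(a_0,a_1,a_3)=(-1,-1,0)$ or $(a_0,a_1,a_3)=(1,1,0)$.
   Context: Let $z_1,z_2,z_3$ be independent indeterminates over $\mathbb{C}$ and define $z_n\in\mathbb{C}(z_1,z_2,z_3)$ for $n\ge4$ by the recursion. A third-order recursion is periodic with period $k$ if all iterates are well-defined elements of $\mathbb{C}(z_1,z_2,z_3)$ (no denominator identically zero) and $z_{k+1}=z_1$, $z_{k+2}=z_2$, $z_{k+3}=z_3$. *)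

From HB Require Import structures.
From mathcomp Require Import all_boot all_order all_algebra.
From mathcomp Require Import fraction.
From mathcomp Require Import mpoly.
From mathcomp Require Import complex.
From mathcomp Require Import Rstruct.
Set Implicit Arguments. Unset Strict Implicit. Unset Printing Implicit Defensive.
Import GRing.Theory.
Local Open Scope ring_scope.

Definition CC : Type := complex Rdefinitions.R.

Definition RF : Type := {fraction {mpoly CC[3]}}.

(* The indeterminates z_1, z_2, z_3 as elements of C(z1,z2,z3)
   (i ranges over 'I_3, i.e. 0,1,2 stand for z_1,z_2,z_3). *)
Definition zvar (i : 'I_3) : RF := @FracField.tofrac {mpoly CC[3]} 'X_i.

Definition cst (c : CC) : RF := @FracField.tofrac {mpoly CC[3]} (c %:MP_[3]).

Definition rstep (a0 a1 a3 : CC) (s : RF * RF * RF) : RF * RF * RF :=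
  let: (x, y, w) := s in
  (y, w, (cst a3 * x + y + cst a1 * w + cst a0) / x).

(* zseq a0 a1 a3 n = z_{n+1}  (0-based index: zseq 0 = z_1, zseq 1 = z_2, ...) *)
Definition zseq (a0 a1 a3 : CC) (n : nat) : RF :=
  (iter n (rstep a0 a1 a3) (zvar ord0, zvar (inord 1), zvar (inord 2))).1.1.

(* Periodicity with period k: all iterates z_4, ..., z_{k+3} are well defined,
   i.e. their denominators z_1, ..., z_k are nonzero in C(z1,z2,z3), and
   z_{k+1} = z_1, z_{k+2} = z_2, z_{k+3} = z_3. *)
Definition periodic_with (a0 a1 a3 : CC) (k : nat) : Prop :=
  (forall n, (n < k)%N -> zseq a0 a1 a3 n != 0) /\
  zseq a0 a1 a3 k = zseq a0 a1 a3 0 /\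
  zseq a0 a1 a3 k.+1 = zseq a0 a1 a3 1 /\
  zseq a0 a1 a3 k.+2 = zseq a0 a1 a3 2.

From HB Require Import structures.
From mathcomp Require Import all_boot all_order all_algebra.
From mathcomp Require Import fraction mpoly complex Rstruct.
From mathcomp Require Import ring.

Set Implicit Arguments. Unset Strict Implicit. Unset Printing Implicit Defensive.
Import GRing.Theory Num.Theory.
Local Open Scope ring_scope.

(* Index the sequence from 0, as [zseq] does, and write x, y, w for z_0, z_1, z_2.
   Running the recursion forward gives z_5 x y w as a polynomial in x, y, w.  If the
   sequence has period 8 then z_8, z_9, z_10 = x, y, w, and running the recursion
   backward gives z_5 (x - a3) (y - a3) (w - a3) as another polynomial.  Comparing
   the two yields a polynomial identity in the indeterminates, hence one valid at
   every complex point, and a few integer points force a3 = 0, a0 = a1, a0 a1 = 1.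
   Conversely, for (a0, a1, a3) = (1, 1, 0) (Todd's recurrence) and (-1, -1, 0) the
   orbit is computed in closed form and returns to (x, y, w) after eight steps. *)

(* For (z_0, z_1, z_2) = (x, y, w):  z_3 x = num3,  z_4 x y = num4,  z_5 x y w = num5.
   For (z_8, z_9, z_10) = (x, y, w):  z_7 (w - a3) = bnum7,  z_6 (y - a3) (w - a3) = bnum6,
   z_5 (x - a3) (y - a3) (w - a3) = bnum5. *)
Section Defect.
Variable R : comNzRingType.
Variables a0 a1 a3 x y w : R.

Definition num3 := a3 * x + y + a1 * w + a0.
Definition num4 := a3 * x * y + x * w + a1 * num3 + a0 * x.
Definition num5 := a3 * x * y * w + y * num3 + a1 * num4 + a0 * x * y.
Definition bnum7 := x + a1 * y + a0.
Definition bnum6 := bnum7 + (a1 * x + a0) * (w - a3).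
Definition bnum5 := bnum6 + a1 * bnum7 * (y - a3) + a0 * (w - a3) * (y - a3).
Definition period8_defect :=
  num5 * ((x - a3) * (y - a3) * (w - a3)) - bnum5 * (x * y * w).
End Defect.

Lemma period8_defect_rmorph (R S : comNzRingType) (f : {rmorphism R -> S})
    a0 a1 a3 x y w :
  f (period8_defect a0 a1 a3 x y w) =
  period8_defect (f a0) (f a1) (f a3) (f x) (f y) (f w).
Proof.
by rewrite /period8_defect /num5 /num4 /num3 /bnum5 /bnum6 /bnum7
  !(rmorphB, rmorphM, rmorphD).
Qed.

Section PeriodicRelation.
Variables (R : comNzRingType) (a0 a1 a3 : R) (z : nat -> R).
Hypothesis zrel : forall n, (n < 8)%N ->
  z n.+3 * z n = a3 * z n + z n.+1 + a1 * z n.+2 + a0.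
Hypotheses (z8 : z 8 = z 0) (z9 : z 9 = z 1) (z10 : z 10 = z 2).

Lemma num5_eq : num5 a0 a1 a3 (z 0) (z 1) (z 2) = z 5 * (z 0 * z 1 * z 2).
Proof.
have e3 : num3 a0 a1 a3 (z 0) (z 1) (z 2) = z 3 * z 0 by rewrite zrel.
have e4 : num4 a0 a1 a3 (z 0) (z 1) (z 2) = z 4 * z 1 * z 0.
  by rewrite zrel // /num4 e3; ring.
transitivity (z 5 * z 2 * (z 0 * z 1)); last by ring.
by rewrite zrel // /num5 e3 e4; ring.
Qed.

Lemma bnum5_eq :
  bnum5 a0 a1 a3 (z 0) (z 1) (z 2) = z 5 * ((z 0 - a3) * (z 1 - a3) * (z 2 - a3)).
Proof.
have zrel_back n : (n < 8)%N -> z n * (z n.+3 - a3) = z n.+1 + a1 * z n.+2 + a0.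
  by move=> lt_n8; rewrite mulrBr mulrC zrel //; ring.
have e7 : bnum7 a0 a1 (z 0) (z 1) = z 7 * (z 2 - a3).
  by rewrite -z8 -z9 -z10 zrel_back.
have e6 : bnum6 a0 a1 a3 (z 0) (z 1) (z 2) = z 6 * (z 1 - a3) * (z 2 - a3).
  by rewrite /bnum6 e7 -z9 -z8 zrel_back //; ring.
transitivity (z 5 * (z 0 - a3) * (z 1 - a3) * (z 2 - a3)); last by ring.
by rewrite -[in RHS]z8 zrel_back // /bnum5 e6 e7; ring.
Qed.

Lemma period8_defect_eq0 : period8_defect a0 a1 a3 (z 0) (z 1) (z 2) = 0.
Proof. by rewrite /period8_defect num5_eq bnum5_eq; ring. Qed.
End PeriodicRelation.

Section DefectParameters.
Variable R : numDomainType.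

(* y |-> period8_defect a0 a1 a3 0 y 0 is a cubic with leading coefficient a3^2;
   the combination below is its third finite difference. *)
Lemma period8_defect_a3 (a0 a1 a3 : R) :
  (forall y, period8_defect a0 a1 a3 0 y 0 = 0) -> a3 = 0.
Proof.
move=> E0.
have : 6%:R * a3 ^+ 2 = period8_defect a0 a1 a3 0 2%:R 0
    - 3%:R * period8_defect a0 a1 a3 0 1 0 + 3%:R * period8_defect a0 a1 a3 0 0 0
    - period8_defect a0 a1 a3 0 (-1) 0.
  by rewrite /period8_defect /num5 /num4 /num3 /bnum5 /bnum6 /bnum7; ring.
rewrite !E0 !mulr0 !subr0 addr0 => /eqP.
by rewrite mulf_eq0 pnatr_eq0 sqrf_eq0 => /eqP.
Qed.

(* For a3 = 0 the defect is x y w times a polynomial that is affine in x, with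
   x-coefficient (a0 a1 - 1) + (a0 - a1) y; h1 and h2 isolate the two parts. *)
Lemma period8_defect_a0_a1 (a0 a1 : R) :
  (forall x y, period8_defect a0 a1 0 x y 1 = 0) -> a0 = a1 /\ a0 * a1 = 1.
Proof.
move=> E0.
have h1 : 4%:R * (a0 - a1) = period8_defect a0 a1 0 2%:R 2%:R 1
    - 2%:R * period8_defect a0 a1 0 1 2%:R 1 - 2%:R * period8_defect a0 a1 0 2%:R 1 1
    + 4%:R * period8_defect a0 a1 0 1 1 1.
  by rewrite /period8_defect /num5 /num4 /num3 /bnum5 /bnum6 /bnum7; ring.
have h2 : 4%:R * (a0 * a1 - 1) = 4%:R * period8_defect a0 a1 0 2%:R 1 1
    - 8%:R * period8_defect a0 a1 0 1 1 1 - period8_defect a0 a1 0 2%:R 2%:R 1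
    + 2%:R * period8_defect a0 a1 0 1 2%:R 1.
  by rewrite /period8_defect /num5 /num4 /num3 /bnum5 /bnum6 /bnum7; ring.
rewrite !E0 !mulr0 !subr0 !addr0 in h1 h2.
split; apply/eqP.
- by move/eqP: h1; rewrite mulf_eq0 pnatr_eq0 subr_eq0.
- by move/eqP: h2; rewrite mulf_eq0 pnatr_eq0 subr_eq0.
Qed.

Lemma period8_defect_params (a0 a1 a3 : R) :
  (forall x y w, period8_defect a0 a1 a3 x y w = 0) ->
  (a0, a1, a3) = (-1, -1, 0) \/ (a0, a1, a3) = (1, 1, 0).
Proof.
move=> E0; have a3_0 := period8_defect_a3 (fun y => E0 0 y 0); subst a3.
have [a0_a1 a1_sq] := period8_defect_a0_a1 (fun x y => E0 x y 1); subst a0.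
move/eqP: a1_sq; rewrite -expr2 sqrf_eq1.
by case/orP => /eqP ->; [right | left].
Qed.
End DefectParameters.

Lemma period8_defect_generic (a0 a1 a3 : CC) :
  period8_defect (cst a0) (cst a1) (cst a3)
    (zvar ord0) (zvar (inord 1)) (zvar (inord 2)) = 0 ->
  forall x y w, period8_defect a0 a1 a3 x y w = 0.
Proof.
move=> E0 x y w.
pose v (i : 'I_3) := nth 0 [:: x; y; w] i.
have : @period8_defect {mpoly CC[3]} a0%:MP a1%:MP a3%:MP
         'X_ord0 'X_(inord 1) 'X_(inord 2) = 0.
  by apply/eqP; rewrite -tofrac_eq0 period8_defect_rmorph; apply/eqP.
move/(congr1 (meval v)); rewrite period8_defect_rmorph rmorph0.
by rewrite /= !mevalC !mevalXU /v /= !inordK.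
Qed.

Lemma zseq_rec a0 a1 a3 n :
  zseq a0 a1 a3 n.+3 =
  (cst a3 * zseq a0 a1 a3 n + zseq a0 a1 a3 n.+1 + cst a1 * zseq a0 a1 a3 n.+2
   + cst a0) / zseq a0 a1 a3 n.
Proof. by rewrite /zseq !iterS; case: (iter n _ _) => [[x y] w]. Qed.

Lemma periodic8_defect a0 a1 a3 : periodic_with a0 a1 a3 8 ->
  forall x y w, period8_defect a0 a1 a3 x y w = 0.
Proof.
case=> nz [z8 [z9 z10]]; apply: period8_defect_generic.
apply: (period8_defect_eq0 (z := zseq a0 a1 a3)) => // n lt_n8.
by rewrite zseq_rec divfK ?nz.
Qed.

Section ToddOrbit.
Variables (K : fieldType) (f : nat -> K) (x y w : K).
Hypotheses (f0 : f 0 = x) (f1 : f 1 = y) (f2 : f 2 = w).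
Hypothesis frec : forall n, f n.+3 = (f n.+1 + f n.+2 + 1) / f n.
Hypotheses (nz_x : x != 0) (nz_y : y != 0) (nz_w : w != 0)
  (nz_3 : y + w + 1 != 0) (nz_4 : x * w + x + y + w + 1 != 0) (nz_7 : x + y + 1 != 0).
Let nondeg := (nz_x, nz_y, nz_w, nz_3, nz_4, nz_7).

Lemma todd_orbit :
  (forall n, (n < 8)%N -> f n != 0) /\ f 8 = f 0 /\ f 9 = f 1 /\ f 10 = f 2.
Proof.
have f3 : f 3 = (y + w + 1) / x by rewrite frec f0 f1 f2.
have f4 : f 4 = (x * w + x + y + w + 1) / (x * y).
  by rewrite frec f1 f2 f3; field; rewrite ?nondeg.
have f5 : f 5 = (y + w + 1) * (x + y + 1) / (x * y * w).
  by rewrite frec f2 f3 f4; field; rewrite ?nondeg.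
have f6 : f 6 = (x * w + x + y + w + 1) / (y * w).
  by rewrite frec f3 f4 f5; field; rewrite ?nondeg.
have f7 : f 7 = (x + y + 1) / w.
  by rewrite frec f4 f5 f6; field; rewrite ?nondeg.
have f8 : f 8 = x by rewrite frec f5 f6 f7; field; rewrite ?nondeg.
have f9 : f 9 = y by rewrite frec f6 f7 f8; field; rewrite ?nondeg.
have f10 : f 10 = w by rewrite frec f7 f8 f9; field; rewrite ?nondeg.
split; last by rewrite f0 f1 f2 f8 f9 f10.
case=> [|[|[|[|[|[|[|[|//]]]]]]]] _; rewrite ?f0 ?f1 ?f2 ?f3 ?f4 ?f5 ?f6 ?f7 //;
  by rewrite ?(mulf_neq0, invr_eq0).
Qed.
End ToddOrbit.

Section NegToddOrbit.
Variables (K : fieldType) (f : nat -> K) (x y w : K).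
Hypotheses (f0 : f 0 = x) (f1 : f 1 = y) (f2 : f 2 = w).
Hypothesis frec : forall n, f n.+3 = (f n.+1 - f n.+2 - 1) / f n.
Hypotheses (nz_x : x != 0) (nz_y : y != 0) (nz_w : w != 0)
  (nz_3 : y - w - 1 != 0) (nz_4 : x * w - x - y + w + 1 != 0)
  (nz_5 : - x * y - x * w + x + y * y - y * w - w - 1 != 0)
  (nz_6 : - x * w + x - y - w - 1 != 0) (nz_7 : x - y - 1 != 0).
Let nondeg := (nz_x, nz_y, nz_w, nz_3, nz_4, nz_5, nz_6, nz_7).

Lemma neg_todd_orbit :
  (forall n, (n < 8)%N -> f n != 0) /\ f 8 = f 0 /\ f 9 = f 1 /\ f 10 = f 2.
Proof.
have f3 : f 3 = (y - w - 1) / x by rewrite frec f0 f1 f2.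
have f4 : f 4 = (x * w - x - y + w + 1) / (x * y).
  by rewrite frec f1 f2 f3; field; rewrite ?nondeg.
have f5 : f 5 = (- x * y - x * w + x + y * y - y * w - w - 1) / (x * y * w).
  by rewrite frec f2 f3 f4; field; rewrite ?nondeg.
have f6 : f 6 = (- x * w + x - y - w - 1) / (y * w).
  by rewrite frec f3 f4 f5; field; rewrite ?nondeg.
have f7 : f 7 = (x - y - 1) / w.
  by rewrite frec f4 f5 f6; field; rewrite ?nondeg.
have f8 : f 8 = x by rewrite frec f5 f6 f7; field; rewrite ?nondeg.
have f9 : f 9 = y by rewrite frec f6 f7 f8; field; rewrite ?nondeg.
have f10 : f 10 = w by rewrite frec f7 f8 f9; field; rewrite ?nondeg.
split; last by rewrite f0 f1 f2 f8 f9 f10.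
case=> [|[|[|[|[|[|[|[|//]]]]]]]] _; rewrite ?f0 ?f1 ?f2 ?f3 ?f4 ?f5 ?f6 ?f7 //;
  by rewrite ?(mulf_neq0, invr_eq0).
Qed.
End NegToddOrbit.

Lemma tofrac_neq0_at (p : {mpoly CC[3]}) (v : 'I_3 -> CC) :
  p.@[v] != 0 -> tofrac p != 0.
Proof. by move=> hv; rewrite tofrac_eq0; apply: contraNneq hv => ->; rewrite meval0. Qed.

Lemma zvar_neq0 i : zvar i != 0.
Proof. by apply: (tofrac_neq0_at (v := fun=> 1)); rewrite mevalXU oner_eq0. Qed.

Local Notation tf := (@tofrac {mpoly CC[3]}).

(* Fold a polynomial expression in the [zvar]s back into [tofrac] of a polynomial,
   and show that polynomial nonzero by evaluating it at the origin. *)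
Ltac rf_neq0 :=
  rewrite /zvar -(rmorph1 tf) -?(rmorphN tf) -!(rmorphM tf, rmorphB tf, rmorphD tf);
  apply: (tofrac_neq0_at (v := fun=> 0));
  by rewrite !(mevalD, mevalB, mevalN, mevalM, mevalXU, meval1)
             !(mul0r, mulr0, oppr0, add0r, addr0, subr0, sub0r) ?oppr_eq0 oner_eq0.

Lemma periodic8_todd : periodic_with 1 1 0 8.
Proof.
apply: (todd_orbit (f := zseq 1 1 0) (x := zvar ord0) (y := zvar (inord 1))
          (w := zvar (inord 2))) => //.
  by move=> n; rewrite zseq_rec /cst !rmorph1 !rmorph0 mul0r add0r mul1r.
all: first [exact: zvar_neq0 | rf_neq0].
Qed.

Lemma periodic8_neg_todd : periodic_with (-1) (-1) 0 8.
Proof.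
apply: (neg_todd_orbit (f := zseq (-1) (-1) 0) (x := zvar ord0) (y := zvar (inord 1))
          (w := zvar (inord 2))) => //.
  by move=> n; rewrite zseq_rec /cst !rmorphN !rmorph1 !rmorph0 mul0r add0r !mulN1r.
all: first [exact: zvar_neq0 | rf_neq0].
Qed.

Theorem mainTheorem6 (a0 a1 a3 : CC) :
  periodic_with a0 a1 a3 8 <->
  ((a0, a1, a3) = (-1, -1, 0) \/ (a0, a1, a3) = (1, 1, 0)).
Proof.
split; first by move/periodic8_defect; apply: period8_defect_params.
by case=> [[-> -> ->] | [-> -> ->]]; [exact: periodic8_neg_todd | exact: periodic8_todd].
Qed.
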